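(* Let $K=\mathbb{Z}/3$, let $G$ be a simple graph with edges $e_1,\dots,e_s$ ($s\ge1$), and let $d\ge0$. With $\mathcal{B}_d$ and $\mathcal{J}_d$ as in the context, the map $\mathcal{B}_d\to\mathcal{J}_d$, $t^\gamma\mapsto\{e_i: i\in\operatorname{supp}(\gamma)\}$, is well defined and a bijection. In particular, $$\dim_K C_X(d)=\sum_{i\ge0}|\mathcal{J}_{d-2i}|.$$
   Context: Let $G$ be a simple graph with vertex set $\{1,\dots,n\}$ and a fixed ordering $e_1,\dots,e_s$ of its edges; edge $e_k$ is identified with the variable $t_k$ of $S=K[t_1,\dots,t_s]$, $K$ a finite field. Let $X\subseteq\mathbb{P}^{s-1}$ be the image of the projective torus $\{(x_1:\dots:x_n): x_i\neq0\}\subseteq\mathbb{P}^{n-1}$ under the map whose $k$-th coordinate is $x_ix_j$ when $e_k=\{i,j\}$. Order $X=\{P_1,\dots,P_m\}$. For $d\ge0$, $C_X(d)\subseteq K^m$ is the image of $S_d$ under $f\mapsto \big(f(P_1)/t_1^d(P_1),\dots,f(P_m)/t_1^d(P_m)\big)$. $I(X)$ is the ideal generated by homogeneous polynomials vanishing on $X$. For $\gamma\in\mathbb{N}^s$, $t^\gamma=t_1^{\gamma_1}\cdots t_s^{\gamma_s}$. $\mathcal{B}_d$ is the set of monomials of degree $d$ not divisible by the leading term, in graded reverse lexicographic order with $t_1>\dots>t_s$, of any polynomial in $(I(X),t_s^2)$; $\mathcal{B}_d=\emptyset$ for $d<0$. An Eulerian subgraph of $G$ is a subgraph in which every vertex has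 even degree; its last edge is its edge $e_i$ of largest index $i$. A set $J\subseteq E_G$ is a parity join if $|J\cap E_C|\le |E_C|/2$ for every Eulerian subgraph $C\subseteq G$ with an even number of edges. For $d\ge0$, $\mathcal{J}_d$ is the set of parity joins $J$ with $|J|=d$ such that $J$ contains the last edge of every Eulerian subgraph $C$ (with an even number of edges) for which $|J\cap E_C|=|E_C|/2$; $\mathcal{J}_d=\emptyset$ for $d<0$. *)

From HB Require Import structures.
From mathcomp Require Import all_boot all_order all_algebra.
From mathcomp Require Import mpoly.
Set Implicit Arguments. Unset Strict Implicit. Unset Printing Implicit Defensive.
Import Order.TTheory GRing.Theory.
Local Open Scope ring_scope.

Notation K := 'F_3.

Section Defs.
Variables (n s : nat) (E : 'I_s -> {set 'I_n}).
(* Vertices are 'I_n (vertex i+1 of the paper is i), edges are indexed by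
   'I_s: edge e_(k+1) of the paper is E k, an unordered pair of vertices. *)

(* k-th coordinate of a vector (0-based), 0 if out of range *)
Definition coordk (v : 'I_s -> K) (k : nat) : K :=
  if insub k is Some i then v i else 0.

(* variable t_(k+1) of S (0-based index k), 0 if out of range *)
Definition tvar (k : nat) : {mpoly K[s]} :=
  if insub k is Some i then 'X_i else 0.

(* the monomial map on the torus: k-th coordinate x_i x_j if E k = {i,j} *)
Definition monmap (x : {ffun 'I_n -> K}) : {ffun 'I_s -> K} :=
  [ffun k => \prod_(v in E k) x v].

(* the canonical representative of a projective point with nonzero first
   coordinate: scale so that the first coordinate is 1 *)
Definition normalize (v : {ffun 'I_s -> K}) : {ffun 'I_s -> K} :=
  [ffun k => v k / coordk v 0].

(* the projective torus of P^(n-1) and its image X in P^(s-1); points of X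
   are represented by their normalized representatives *)
Definition torus : {set {ffun 'I_n -> K}} := [set x : {ffun 'I_n -> K} | [forall i, x i != 0]].
Definition Xset : {set {ffun 'I_s -> K}} := [set normalize (monmap x) | x in torus].

Definition Xpt (i : 'I_#|Xset|) : {ffun 'I_s -> K} := enum_val i.

Definition evrow (d : nat) (f : {mpoly K[s]}) : 'rV[K]_#|Xset| :=
  \row_(i < #|Xset|) (f.@[Xpt i] / (coordk (Xpt i) 0) ^+ d).

Definition monos (d : nat) : seq 'X_{1..s} :=
  [seq val m | m <- enum [set: 'X_{1..s < d.+1}] & mdeg (val m) == d].

(* C_X(d) = image of S_d under the evaluation map *)
Definition CX (d : nat) : {vspace 'rV[K]_#|Xset|} :=
  <<[seq evrow d 'X_[m] | m <- monos d]>>%VS.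

Definition is_homog (d : nat) (f : {mpoly K[s]}) : Prop :=
  forall m, m \in msupp f -> mdeg m = d.

Definition vanishes_on_X (f : {mpoly K[s]}) : Prop :=
  forall P, P \in Xset -> f.@[P] = 0.

(* membership in the ideal (I(X), t_s^2): I(X) is generated by the
   homogeneous polynomials vanishing on X *)
Definition in_IXts2 (f : {mpoly K[s]}) : Prop :=
  exists (gh : seq ({mpoly K[s]} * {mpoly K[s]})) (g0 : {mpoly K[s]}),
    (forall p, p \in gh -> (exists e, is_homog e p.2) /\ vanishes_on_X p.2) /\
    f = \sum_(p <- gh) p.1 * p.2 + g0 * (tvar s.-1) ^+ 2.

(* graded reverse lexicographic order with t_1 > ... > t_s:
   grevlex_lt a b  means  t^a < t^b *)
Definition grevlex_lt (a b : 'X_{1..s}) : Prop :=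
  (mdeg a < mdeg b)%N \/
  (mdeg a = mdeg b /\ exists k : 'I_s,
      (b k < a k)%N /\ forall j : 'I_s, (k < j)%N -> a j = b j).

Definition leading_mono (m : 'X_{1..s}) (f : {mpoly K[s]}) : Prop :=
  m \in msupp f /\ forall m', m' \in msupp f -> m' <> m -> grevlex_lt m' m.

Definition mdivides (a b : 'X_{1..s}) : Prop := forall i, (a i <= b i)%N.

Definition Bd (d : nat) (m : 'X_{1..s}) : Prop :=
  mdeg m = d /\
  ~ (exists f lm, in_IXts2 f /\ f != 0 /\ leading_mono lm f /\ mdivides lm m).

Definition suppset (m : 'X_{1..s}) : {set 'I_s} := [set i | (0 < m i)%N].

Definition vdeg (C : {set 'I_s}) (v : 'I_n) : nat := #|[set i in C | v \in E i]|.

Definition eulerian (C : {set 'I_s}) : bool :=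
  (C != set0) && [forall v, ~~ odd (vdeg C v)].

Definition even_eulerian (C : {set 'I_s}) : bool := eulerian C && ~~ odd #|C|.

Definition parity_join (J : {set 'I_s}) : bool :=
  [forall C, even_eulerian C ==> (#|J :&: C|.*2 <= #|C|)%N].

Definition last_edge_cond (J : {set 'I_s}) : bool :=
  [forall C, (even_eulerian C && (#|J :&: C|.*2 == #|C|)) ==>
     [forall i in C, [forall j in C, (j <= i)%N] ==> (i \in J)]].

Definition Jset (d : nat) : {set {set 'I_s}} :=
  [set J | [&& parity_join J, #|J| == d & last_edge_cond J]].

End Defs.

From HB Require Import structures.
From mathcomp Require Import all_boot all_order all_algebra.
From mathcomp Require Import mpoly.
From mathcomp Require Import zify.
Import GRing.Theory.
Set Implicit Arguments. Unset Strict Implicit. Unset Printing Implicit Defensive.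
Local Open Scope ring_scope.

(* Over F_3 every point of X is a vector of signs with first coordinate 1, so on X a monomial
   t^m agrees with t^A for A its odd support, and t^A = t^B on X as soon as the symmetric
   difference of A and B is an even cycle (all vertex degrees even, even size). On the other
   hand, summing t^C over the sign points coming from {1, -1}^n gives 0 for an even C that is
   not a cycle: it is a character sum over the cube. Parity joins with the last edge condition
   are exactly the representatives of the classes modulo even cycles that are minimal in size,
   then in grevlex order, and each class has exactly one of them.
   Binomials t^a - t^b between congruent monomials, and t_i^2 - t_s^2, show that a monomial of
   B_d is squarefree with support such a good join; the character sums show that no leading
   term of the ideal divides t^J for a good join J. The same sums make the evaluations of the
   t^J, for J good with |J| <= d and |J| = d mod 2, a basis of C_X(d). *)

Lemma F3_sqr_eq1 (z : K) : z != 0 -> z ^+ 2 = 1.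
Proof. by move=> nz; apply/eqP; move: z nz; case=> [[|[|[|]]] //]. Qed.

Lemma F3_eq_opp (z : K) : z = - z -> z = 0.
Proof. by move/eqP => h; apply/eqP; move: z h; case=> [[|[|[|]]] //]. Qed.

Lemma F3_pow2_neq0 k : ((2 ^ k)%:R : K) != 0.
Proof. by rewrite natrX expf_neq0. Qed.

Section SymDiff.
Variable T : finType.
Implicit Types A B C : {set T}.

Definition symdiff A B := (A :\: B) :|: (B :\: A).

Lemma in_symdiff x A B : (x \in symdiff A B) = (x \in A) (+) (x \in B).
Proof. by rewrite !inE; case: (x \in A); case: (x \in B). Qed.

Lemma symdiffA A B C : symdiff A (symdiff B C) = symdiff (symdiff A B) C.
Proof. by apply/setP => x; rewrite !(in_symdiff, inE); rewrite addbA. Qed.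

Lemma symdiffK A B : symdiff A (symdiff A B) = B.
Proof. by apply/setP => x; rewrite !(in_symdiff, inE); rewrite addbA addbb. Qed.

Lemma symdiffvv A : symdiff A A = set0.
Proof. by apply/setP => x; rewrite !(in_symdiff, inE); rewrite addbb. Qed.

Lemma symdiff0 A : symdiff A set0 = A.
Proof. by apply/setP => x; rewrite !(in_symdiff, inE); rewrite addbF. Qed.

Lemma symdiff_eq0 A B : symdiff A B = set0 -> A = B.
Proof. by move=> h; rewrite -(symdiffK A B) h symdiff0. Qed.

Lemma card_symdiff A B : (#|symdiff A B| + #|A :&: B|.*2 = #|A| + #|B|)%N.
Proof.
have dis : (A :\: B) :&: (B :\: A) = set0.
  by apply/setP => x; rewrite !inE; case: (x \in A); case: (x \in B).
rewrite cardsU dis cards0 subn0 -(cardsID B A) -(cardsID A B) setIC; lia.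
Qed.

Lemma odd_card_symdiff A B : odd #|symdiff A B| = odd #|A| (+) odd #|B|.
Proof. by have /(congr1 odd) := card_symdiff A B; rewrite !oddD odd_double addbF. Qed.

Lemma symdiff_setI_setD A B : symdiff (A :&: B) (B :\: A) = B.
Proof. by apply/setP => x; rewrite in_symdiff !inE; case: (x \in A); case: (x \in B). Qed.

End SymDiff.

Lemma sqr1_exprE (R : pzSemiRingType) (c : R) k : c ^+ 2 = 1 -> c ^+ k = c ^+ odd k.
Proof.
by move=> c2; rewrite -{1}(odd_double_half k) exprD -muln2 mulnC exprM c2 expr1n mulr1.
Qed.

Lemma pihomogM_dhomog (R : nzRingType) s (p q : {mpoly R[s]}) e D : q \is e.-homog ->
  exists r, pihomog mdeg D (p * q) = r * q /\ {in msupp r, forall m, (mdeg m + e)%N = D}.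
Proof.
move=> q_homog; pose r := \sum_(d < msize p | (d + e)%N == D) pihomog mdeg d p.
exists r; split.
  rewrite {1}(pihomog_partitionE (leqnn (msize p))) mulr_suml raddf_sum /= /r.
  rewrite mulr_suml [RHS]big_mkcond /=; apply: eq_bigr => d _.
  have pq_homog := dhomogM (pihomogP mdeg d p) q_homog.
  case: eqP => [<-|ne]; first by rewrite pihomog_dE.
  by apply: pihomog_ne0 pq_homog; apply/eqP.
case: (leqP e D) => [le_eD|lt_De]; last first.
  by rewrite /r big1 ?msupp0 // => d /eqP; lia.
have /dhomogP r_homog : r \is (D - e).-homog.
  by apply: rpred_sum => d /eqP <-; rewrite addnK; apply: pihomogP.
by move=> m /r_homog ->; lia.
Qed.

Section Exponents.
Variable s : nat.
Implicit Types (A : {set 'I_s}) (m : 'X_{1..s}).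

Definition setmnm A : 'X_{1..s} := [multinom (i \in A : nat) | i < s].
Definition odd_supp m := [set i | odd (m i)].

Lemma setmnmE A i : setmnm A i = (i \in A).
Proof. by rewrite mnmE. Qed.

Lemma mdeg_setmnm A : mdeg (setmnm A) = #|A|.
Proof.
rewrite mdegE -sum1_card [RHS]big_mkcond.
by apply: eq_bigr => i _; rewrite setmnmE; case: (i \in A).
Qed.

Lemma odd_supp_setmnm A : odd_supp (setmnm A) = A.
Proof. by apply/setP => i; rewrite inE setmnmE; case: (i \in A). Qed.

Lemma odd_supp_addl A m : odd_supp (setmnm A + m)%MM = symdiff A (odd_supp m).
Proof. by apply/setP => i; rewrite in_symdiff !inE mnmDE setmnmE oddD; case: (i \in A). Qed.

Lemma mdeg_odd_supp m : mdeg m = (#|odd_supp m| + (\sum_i (m i)./2).*2)%N.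
Proof.
rewrite mdegE -sum1_card [X in (X + _)%N]big_mkcond -muln2 big_distrl -big_split /=.
by apply: eq_bigr => i _; rewrite inE muln2 -{1}(odd_double_half (m i)); case: odd.
Qed.

Lemma card_odd_supp_le m : (#|odd_supp m| <= mdeg m)%N.
Proof. by rewrite mdeg_odd_supp leq_addr. Qed.

Lemma odd_card_odd_supp m : odd #|odd_supp m| = odd (mdeg m).
Proof. by rewrite mdeg_odd_supp oddD odd_double addbF. Qed.

Lemma odd_supp_eq m : #|odd_supp m| = mdeg m -> m = setmnm (odd_supp m).
Proof.
rewrite mdeg_odd_supp => /eqP; rewrite -{1}[#|_|]addn0 eqn_add2l eq_sym double_eq0.
rewrite sum_nat_eq0 => /forallP half0; apply/mnmP => i; rewrite setmnmE inE.
by rewrite -(odd_double_half (m i)) (eqP (half0 i)) addn0 oddb.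
Qed.

Lemma odd_supp_mulmn m c : ~~ odd c -> odd_supp (m *+ c)%MM = set0.
Proof. by move=> c_even; apply/setP => i; rewrite !inE mulmnE oddM (negbTE c_even) andbF. Qed.

Lemma suppset_setmnm J : suppset (setmnm J) = J.
Proof. by apply/setP => i; rewrite inE setmnmE; case: (i \in J). Qed.

Lemma mdivides_setmnm a J : mdivides a (setmnm J) -> a = setmnm (suppset a) /\ suppset a \subset J.
Proof.
move=> a_div; split.
  apply/mnmP => i; rewrite setmnmE inE; move: (a_div i); rewrite setmnmE.
  by case: (i \in J); case: (a i) => [|[]].
apply/subsetP => i; rewrite inE; have := a_div i; rewrite setmnmE.
by case: (i \in J) => //; case: (a i).
Qed.

Lemma mdivides_setmnm_supp A m : A \subset suppset m -> mdivides (setmnm A) m.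
Proof.
by move=> /subsetP Am i; rewrite setmnmE; case Ai: (i \in A) => //; move: (Am i Ai); rewrite inE.
Qed.

Lemma grevlex_lt_asym (a b : 'X_{1..s}) : grevlex_lt a b -> ~ grevlex_lt b a.
Proof.
case=> [ab|[e1 [k1 [hk1 ha1]]]] [ba|[e2 [k2 [hk2 ha2]]]]; try lia.
case: (ltngtP k1 k2) => k12; first (by have := ha1 _ k12; lia); first (by have := ha2 _ k12; lia).
by have e : k1 = k2 := val_inj k12; subst; lia.
Qed.

Lemma grevlex_lt_mdeg (a b : 'X_{1..s}) : grevlex_lt a b -> (mdeg a <= mdeg b)%N.
Proof. by case=> [/ltnW|[->]]. Qed.

Lemma grevlex_lt_symdiff (J C : {set 'I_s}) (i : 'I_s) : i \in C -> i \in J ->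
  (forall j, j \in C -> (j <= i)%N) -> #|symdiff J C| = #|J| ->
  grevlex_lt (setmnm J) (setmnm (symdiff J C)).
Proof.
move=> Ci Ji imax card_eq; right; split; first by rewrite !mdeg_setmnm.
exists i; split; first by rewrite !setmnmE in_symdiff Ci Ji.
move=> j ij; rewrite !setmnmE in_symdiff.
suff -> : (j \in C) = false by rewrite addbF.
by apply/negbTE/negP => /imax; rewrite leqNgt ij.
Qed.

End Exponents.

Section MonomialValues.
Variables (R : comNzRingType) (s : nat) (P : 'I_s -> R).
Hypothesis P_sqr : forall k, P k ^+ 2 = 1.

Lemma meval_odd_supp (m : 'X_{1..s}) :
  ('X_[m] : {mpoly R[s]}).@[P] = ('X_[setmnm (odd_supp m)] : {mpoly R[s]}).@[P].
Proof.
by rewrite !mevalX; apply: eq_bigr => i _; rewrite setmnmE inE (sqr1_exprE _ (P_sqr i)).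
Qed.

Lemma meval_setmnm_sqr (A : {set 'I_s}) : ('X_[setmnm A] : {mpoly R[s]}).@[P] ^+ 2 = 1.
Proof.
rewrite mevalX -prodrXl; apply: big1 => i _.
by rewrite -exprM (sqr1_exprE _ (P_sqr i)) oddM andbF.
Qed.

Lemma meval_setmnmM (A B : {set 'I_s}) :
  ('X_[setmnm A] : {mpoly R[s]}).@[P] * ('X_[setmnm B] : {mpoly R[s]}).@[P] =
  ('X_[setmnm (symdiff A B)] : {mpoly R[s]}).@[P].
Proof.
by rewrite -mevalM -mpolyXD meval_odd_supp odd_supp_addl odd_supp_setmnm.
Qed.

End MonomialValues.

Section CycleSpace.
Variables (n s : nat) (E : 'I_s -> {set 'I_n}).
Implicit Types A B C J : {set 'I_s}.

(* Unlike Eulerian subgraphs, cycle sets may be empty: they form a group under [symdiff]. *)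
Definition cycle_set C := [forall v, ~~ odd (vdeg E C v)].
Definition even_cycle C := cycle_set C && ~~ odd #|C|.

Lemma odd_vdeg_symdiff A B v :
  odd (vdeg E (symdiff A B) v) = odd (vdeg E A v) (+) odd (vdeg E B v).
Proof.
rewrite /vdeg -odd_card_symdiff (_ : [set i in symdiff A B | v \in E i] =
  symdiff [set i in A | v \in E i] [set i in B | v \in E i]) //.
by apply/setP => x; rewrite !(inE, in_symdiff); case: (x \in A); case: (x \in B); case: (v \in E x).
Qed.

Lemma cycle_set_symdiff A B : cycle_set A -> cycle_set B -> cycle_set (symdiff A B).
Proof.
move=> /forallP cA /forallP cB; apply/forallP => v.
by rewrite odd_vdeg_symdiff (negbTE (cA v)) (negbTE (cB v)).
Qed.

Lemma even_cycle_symdiff A B : even_cycle A -> even_cycle B -> even_cycle (symdiff A B).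
Proof.
case/andP => cA eA /andP [cB eB].
by rewrite /even_cycle cycle_set_symdiff // odd_card_symdiff (negbTE eA) (negbTE eB).
Qed.

Lemma even_cycle0 : even_cycle set0.
Proof.
rewrite /even_cycle cards0 andbT; apply/forallP => v.
by rewrite /vdeg (_ : [set i in set0 | _] = set0) ?cards0 // -setP => x; rewrite !inE.
Qed.

Lemma even_eulerianE C : even_eulerian E C = (C != set0) && even_cycle C.
Proof. by rewrite /even_eulerian /eulerian andbA. Qed.

End CycleSpace.

Section BinaryCode.
Variable s : nat.
Local Open Scope nat_scope.

Definition bin (X : {set 'I_s}) := \sum_(i in X) 2 ^ i.

Lemma bin_ltn_expn (X : {set 'I_s}) k : k <= s -> {in X, forall j : 'I_s, j < k} -> bin X < 2 ^ k.
Proof.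
move=> ks Xk; have geom : \sum_(i < k) 2 ^ i < 2 ^ k.
  by have := predn_exp 2 k; rewrite mul1n => <-; rewrite ltn_predL expn_gt0.
apply: leq_ltn_trans geom.
rewrite (@big_ord_widen_cond _ _ _ k s xpredT (fun i => 2 ^ i) ks) /bin.
rewrite big_mkcond [X in _ <= X]big_mkcond.
apply: leq_sum => i _; case: ifP => // /Xk ->; exact: leqnn.
Qed.

Lemma bin_lt_top (X Y : {set 'I_s}) (i : 'I_s) : i \in Y -> i \notin X ->
  (forall j : 'I_s, i < j -> (j \in X) = (j \in Y)) -> bin X < bin Y.
Proof.
move=> Yi Xi agree.
rewrite /bin (bigID (fun j : 'I_s => i < j)) [X in _ < X](bigID (fun j : 'I_s => i < j)) /=.
rewrite [X in X + _](eq_bigl (fun j => (j \in Y) && (i < j))); last first.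
  by move=> j; case: (ltnP i j) => ij; rewrite ?andbF // agree.
rewrite ltn_add2l [X in _ < X](bigD1 i) /=; last by rewrite Yi ltnn.
apply: leq_trans (leq_addr _ _).
apply: leq_ltn_trans (bin_ltn_expn (X := X :&: [set j : 'I_s | j < i]) (ltnW (ltn_ord i)) _).
  apply: eq_leq; apply: eq_bigl => j; rewrite !inE -leqNgt ltn_neqAle.
  by case: (eqVneq (val j) (val i)) => [/val_inj ->|]; rewrite ?(negbTE Xi).
by move=> j; rewrite !inE => /andP [].
Qed.

End BinaryCode.

Section GoodJoins.
Variables (n s : nat) (E : 'I_s -> {set 'I_n}).
Local Open Scope nat_scope.
Implicit Types A C J : {set 'I_s}.

Definition good_join J := parity_join E J && last_edge_cond E J.

Lemma parity_joinP J :
  reflect (forall C, even_cycle E C -> #|J :&: C|.*2 <= #|C|) (parity_join E J).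
Proof.
apply: (iffP forallP) => h C.
- move=> eC; case: (eqVneq C set0) => [->|nC]; first by rewrite setI0 cards0.
  by move/implyP: (h C); apply; rewrite even_eulerianE nC.
- by apply/implyP; rewrite even_eulerianE => /andP [_]; apply: h.
Qed.

Lemma last_edge_condP J :
  reflect (forall C, even_cycle E C -> #|J :&: C|.*2 = #|C| ->
             forall i, i \in C -> (forall j, j \in C -> j <= i) -> i \in J)
          (last_edge_cond E J).
Proof.
apply: (iffP forallP) => h C.
- move=> eC tie i Ci imax; case: (eqVneq C set0) => [C0|nC]; first by rewrite C0 inE in Ci.
  move/implyP: (h C); rewrite even_eulerianE nC eC tie eqxx.
  by move=> /(_ isT) /forall_inP /(_ i Ci) /implyP; apply; apply/forall_inP.
- apply/implyP; rewrite even_eulerianE => /andP [/andP [_ eC] /eqP tie].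
  by apply/forall_inP => i Ci; apply/implyP => /forall_inP; apply: h.
Qed.

Lemma exists_last_edge C : C != set0 -> exists2 i, i \in C & forall j, j \in C -> j <= i.
Proof. by case/set0Pn => i0 Ci0; case: (@arg_maxnP _ i0 (mem C) val Ci0) => i; exists i. Qed.

Lemma parity_join_symdiff J C : parity_join E J -> even_cycle E C ->
  #|J| <= #|symdiff J C| /\ (#|symdiff J C| = #|J| -> #|J :&: C|.*2 = #|C|).
Proof. by move=> /parity_joinP pJ /pJ; have := card_symdiff J C; split; lia. Qed.

Lemma good_join_sub J J' : good_join J -> J' \subset J -> good_join J'.
Proof.
case/andP => /parity_joinP pJ /last_edge_condP lJ sJ'.
have le_cap C : #|J' :&: C| <= #|J :&: C| by apply/subset_leq_card/setSI.
apply/andP; split; apply/parity_joinP || apply/last_edge_condP.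
  by move=> C /pJ; apply: leq_trans; rewrite leq_double.
move=> C eC tie i Ci imax.
have tieJ : #|J :&: C|.*2 = #|C| by have := pJ C eC; have := le_cap C; lia.
have eqJ' : J' :&: C = J :&: C.
  apply/eqP; rewrite eqEcard setSI //=.
  by rewrite -leq_double tie tieJ.
have : i \in J :&: C by rewrite inE (lJ C eC tieJ i Ci imax) Ci.
by rewrite -eqJ' inE => /andP [].
Qed.

Lemma good_join_uniq J1 J2 : good_join J1 -> good_join J2 -> even_cycle E (symdiff J1 J2) ->
  J1 = J2.
Proof.
case/andP => /parity_joinP p1 /last_edge_condP l1 /andP [/parity_joinP p2 /last_edge_condP l2] eC.
set C := symdiff J1 J2 in eC *.
case: (eqVneq C set0) => [/symdiff_eq0 //|nC].
have e2 : J2 :&: C = C :\: J1.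
  by apply/setP => x; rewrite !(inE, in_symdiff); case: (x \in J1); case: (x \in J2).
have splitC : #|J1 :&: C| + #|J2 :&: C| = #|C| by rewrite e2 setIC cardsID.
have := p1 C eC; have := p2 C eC => b2 b1.
have tie1 : #|J1 :&: C|.*2 = #|C| by lia.
have tie2 : #|J2 :&: C|.*2 = #|C| by lia.
case: (exists_last_edge nC) => i Ci imax.
by move: (Ci); rewrite in_symdiff (l1 C eC tie1 i Ci imax) (l2 C eC tie2 i Ci imax).
Qed.

(* Every class modulo even cycles contains a good join of no larger size: take a member of
   minimum size, and among those one whose complement has the least binary code; an even
   cycle violating the parity join (resp. last edge) condition would decrease the size
   (resp. the code). *)
Lemma good_join_exists A :
  exists J, [/\ good_join J, even_cycle E (symdiff A J) & #|J| <= #|A|].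
Proof.
pose key J := #|J| * 2 ^ s + bin (~: J).
have key_lt J J' : #|J| < #|J'| -> key J < key J'.
  move=> lt; have := bin_ltn_expn (X := ~: J) (leqnn s) (fun j _ => ltn_ord j).
  have : #|J|.+1 * 2 ^ s <= #|J'| * 2 ^ s by rewrite leq_mul2r lt orbT.
  by rewrite /key mulSn; lia.
pose P := [pred J | even_cycle E (symdiff A J)].
have PA : P A by rewrite /P /= symdiffvv even_cycle0.
case: (@arg_minnP _ A P key PA) => J PJ Jmin.
have P_symdiff C : even_cycle E C -> P (symdiff J C).
  by move=> eC; rewrite /P /= symdiffA even_cycle_symdiff.
exists J; split => //; last by rewrite leqNgt; apply/negP => /key_lt; rewrite ltnNge Jmin.
apply/andP; split.
  apply/parity_joinP => C eC; rewrite leqNgt; apply/negP => big.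
  have : #|symdiff J C| < #|J| by have := card_symdiff J C; lia.
  by move/key_lt; rewrite ltnNge Jmin // P_symdiff.
apply/last_edge_condP => C eC tie i Ci imax; apply/negPn/negP => Ji.
have := Jmin _ (P_symdiff C eC); rewrite /key.
have -> : #|symdiff J C| = #|J| by have := card_symdiff J C; lia.
rewrite leq_add2l leqNgt => /negP; apply; apply: (bin_lt_top (i := i)).
- by rewrite inE.
- by rewrite !(inE, in_symdiff) Ci (negbTE Ji).
- move=> j ij; rewrite !inE.
  suff -> : (j \in C) = false by rewrite andbF orbF.
  by apply/negbTE/negP => /imax; rewrite leqNgt ij.
Qed.

End GoodJoins.

Section PointsOfX.
Variables (n s : nat) (E : 'I_s -> {set 'I_n}).
Hypothesis s_gt0 : (0 < s)%N.
Implicit Types (C : {set 'I_s}) (P : {ffun 'I_s -> K}) (b : {ffun 'I_n -> bool}).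

Definition e0 : 'I_s := Ordinal s_gt0.
Definition elast : 'I_s := Ordinal (etrans (ltn_predL s) s_gt0).

Lemma coordk0 (v : 'I_s -> K) : coordk v 0 = v e0.
Proof.
by rewrite /coordk; case: insubP => [i _ i0|]; [congr (v _); apply: val_inj | rewrite s_gt0].
Qed.

Lemma tvar_last : tvar s s.-1 = 'X_elast.
Proof.
rewrite /tvar; case: insubP => [i _ iS|]; last by rewrite ltn_predL s_gt0.
by congr 'X_ _; apply: val_inj.
Qed.

Definition sgn_vec (b : {ffun 'I_n -> bool}) : {ffun 'I_n -> K} :=
  [ffun v => if b v then -1 else 1].
Definition sgn_pt b := normalize (monmap E (sgn_vec b)).

Lemma monmap_sqr x : x \in torus n -> forall k, monmap E x k ^+ 2 = 1.
Proof.
rewrite inE => /forallP x_nz k; rewrite ffunE -prodrXl.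
by apply: big1 => v _; rewrite F3_sqr_eq1.
Qed.

Lemma meval_normalize (v : {ffun 'I_s -> K}) (m : 'X_{1..s}) :
  ('X_[m] : {mpoly K[s]}).@[normalize v] = ('X_[m] : {mpoly K[s]}).@[v] * (v e0)^-1 ^+ mdeg m.
Proof.
rewrite !mevalX mdegE -prodrXr -big_split; apply: eq_bigr => i _.
by rewrite ffunE coordk0 exprMn.
Qed.

Lemma Xset_sqr P : P \in Xset E -> forall k, P k ^+ 2 = 1.
Proof.
case/imsetP => x /monmap_sqr x2 -> k.
by rewrite ffunE coordk0 expr_div_n !x2 divr1.
Qed.

Lemma Xset_e0 P : P \in Xset E -> P e0 = 1.
Proof.
case/imsetP => x /monmap_sqr x2 ->; rewrite ffunE coordk0 divff //.
by apply/eqP => z; have := x2 e0; rewrite z expr0n /= => /eqP; rewrite eq_sym oner_eq0.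
Qed.

Lemma sgn_vec_torus b : sgn_vec b \in torus n.
Proof. by rewrite inE; apply/forallP => v; rewrite ffunE; case: (b v). Qed.

Lemma sgn_pt_in b : sgn_pt b \in Xset E.
Proof. exact/imset_f/sgn_vec_torus. Qed.

Lemma meval_monmap x (C : {set 'I_s}) :
  ('X_[setmnm C] : {mpoly K[s]}).@[monmap E x] = \prod_v x v ^+ vdeg E C v.
Proof.
rewrite mevalX.
transitivity (\prod_k \prod_v (if v \in E k then x v ^+ (k \in C) else 1)).
  apply: eq_bigr => k _; rewrite ffunE setmnmE -prodrXl big_mkcond /=.
  by apply: eq_bigr => v _; case: ifP.
rewrite exchange_big /=; apply: eq_bigr => v _.
rewrite -big_mkcond /= prodrXr; congr (_ ^+ _).
rewrite /vdeg -sum1_card big_mkcond [RHS]big_mkcond /=.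
by apply: eq_bigr => k _; rewrite inE; case: (k \in C); case: (v \in E k).
Qed.

Lemma meval_even_cycle P C : P \in Xset E -> even_cycle E C ->
  ('X_[setmnm C] : {mpoly K[s]}).@[P] = 1.
Proof.
case/imsetP => x x_torus -> /andP [/forallP C_cyc C_even].
rewrite meval_normalize meval_monmap mdeg_setmnm exprVn.
rewrite (sqr1_exprE _ (monmap_sqr x_torus e0)) (negbTE C_even) invr1 mulr1.
apply: big1 => v _; rewrite (sqr1_exprE _ (F3_sqr_eq1 _)) ?(negbTE (C_cyc v)) //.
by move: x_torus; rewrite inE => /forallP.
Qed.

Lemma meval_sgn_pt b C : ~~ odd #|C| ->
  ('X_[setmnm C] : {mpoly K[s]}).@[sgn_pt b] = \prod_v sgn_vec b v ^+ vdeg E C v.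
Proof.
move=> C_even; rewrite meval_normalize meval_monmap mdeg_setmnm exprVn.
by rewrite (sqr1_exprE _ (monmap_sqr (sgn_vec_torus b) e0)) (negbTE C_even) invr1 mulr1.
Qed.

Lemma sum_sgn_pt_even_cycle C : even_cycle E C ->
  \sum_b ('X_[setmnm C] : {mpoly K[s]}).@[sgn_pt b] = (2 ^ n)%:R.
Proof.
move=> eC; rewrite (eq_bigr (fun _ => 1)) => [|b _]; last exact: meval_even_cycle (sgn_pt_in b) eC.
by rewrite sumr_const card_ffun card_bool card_ord.
Qed.

(* Outside the cycle space the sum is a character sum over the cube {1, -1}^n: flipping the
   sign at a vertex of odd degree negates each term. *)
Lemma sum_sgn_pt_noncycle C : ~~ cycle_set E C -> ~~ odd #|C| ->
  \sum_b ('X_[setmnm C] : {mpoly K[s]}).@[sgn_pt b] = 0.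
Proof.
rewrite negb_forall => /existsP [v0]; rewrite negbK => odd_v0 C_even.
under eq_bigr => b _ do rewrite meval_sgn_pt //.
pose flip (b : {ffun 'I_n -> bool}) : {ffun 'I_n -> bool} :=
  [ffun v => if v == v0 then ~~ b v else b v].
have flipK : involutive flip.
  by move=> b; apply/ffunP => v; rewrite !ffunE; case: eqP => // _; rewrite negbK.
apply: F3_eq_opp; rewrite {1}(reindex_inj (can_inj flipK)) /= -sumrN.
apply: eq_bigr => b _; rewrite (bigD1 v0) //= [in RHS](bigD1 v0) //= !ffunE eqxx -mulNr.
congr (_ * _); last by apply: eq_bigr => v v_ne; rewrite !ffunE (negbTE v_ne).
rewrite -(odd_double_half (vdeg E C v0)) odd_v0 !exprD !expr1 -!muln2 !(mulnC _ 2) !exprM.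
by case: (b v0) => /=; rewrite ?sqrrN !expr1n !mulr1 ?opprK.
Qed.

End PointsOfX.

Section StandardMonomials.
Variables (n s : nat) (E : 'I_s -> {set 'I_n}).
Hypothesis s_gt0 : (0 < s)%N.
Implicit Types (J C : {set 'I_s}) (m : 'X_{1..s}) (f : {mpoly K[s]}).

Lemma good_join_setmnm_min J m : good_join E J -> even_cycle E (symdiff J (odd_supp m)) ->
  (mdeg m <= #|J|)%N -> m = setmnm J \/ grevlex_lt (setmnm J) m.
Proof.
case/andP=> pJ /last_edge_condP lJ eC le_mJ.
set C := symdiff J (odd_supp m) in eC.
have suppE : odd_supp m = symdiff J C by rewrite symdiffK.
have [ge_J tie] := parity_join_symdiff pJ eC; rewrite -suppE in ge_J tie.
have le_supp := card_odd_supp_le m.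
have card_supp : #|odd_supp m| = #|J|.
  by apply/eqP; rewrite eqn_leq ge_J (leq_trans le_supp le_mJ).
have mE : m = setmnm (symdiff J C).
  by rewrite -suppE; apply: odd_supp_eq; apply/eqP; rewrite eqn_leq le_supp card_supp.
case: (eqVneq C set0) => [C0|nC]; first by left; rewrite mE C0 symdiff0.
case: (exists_last_edge nC) => i Ci imax; right; rewrite mE.
apply: grevlex_lt_symdiff (lJ C eC (tie card_supp) i Ci imax) imax _ => //.
by rewrite -suppE.
Qed.

Lemma sum_sgn_pt_good_join J m : good_join E J -> (mdeg m <= #|J|)%N ->
  odd (mdeg m) = odd #|J| -> ~ (m = setmnm J \/ grevlex_lt (setmnm J) m) ->
  \sum_b 'X_[setmnm J].@[sgn_pt E b] * 'X_[m].@[sgn_pt E b] = 0.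
Proof.
move=> gJ le_mJ par not_min.
under eq_bigr => b _ do
  rewrite (meval_odd_supp (Xset_sqr s_gt0 (sgn_pt_in E b)) m)
          (meval_setmnmM (Xset_sqr s_gt0 (sgn_pt_in E b)) J (odd_supp m)).
have C_even : ~~ odd #|symdiff J (odd_supp m)|.
  by rewrite odd_card_symdiff odd_card_odd_supp par addbb.
have [C_cyc|] := boolP (cycle_set E (symdiff J (odd_supp m))); last first.
  by move/sum_sgn_pt_noncycle; apply.
by case: not_min; apply: good_join_setmnm_min => //; apply/andP.
Qed.

Definition char_fun J f : K :=
  \sum_b 'X_[setmnm J].@[sgn_pt E b] * (pihomog mdeg #|J| f).@[sgn_pt E b].

Lemma char_sum_lowdeg J (r : {mpoly K[s]}) : good_join E J ->
  {in msupp r, forall m, (mdeg m + 2)%N = #|J|} ->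
  \sum_b 'X_[setmnm J].@[sgn_pt E b] * r.@[sgn_pt E b] = 0.
Proof.
move=> gJ r_deg; rewrite [r]mpolyE; under eq_bigr => b _ do rewrite raddf_sum mulr_sumr.
rewrite exchange_big /=; apply: big1_seq => m /andP [_ m_supp].
under eq_bigr => b _ do rewrite mevalZ mulrCA.
have deg_m := r_deg m m_supp.
rewrite -mulr_sumr sum_sgn_pt_good_join ?mulr0 //; first lia.
  by rewrite -deg_m oddD addbF.
case=> [mJ|/grevlex_lt_mdeg]; last by rewrite mdeg_setmnm; lia.
by move: deg_m; rewrite mJ mdeg_setmnm; lia.
Qed.

Lemma char_fun_ideal J f : good_join E J -> in_IXts2 E f -> char_fun J f = 0.
Proof.
move=> gJ [gh [g0 [gh_ok ->]]].
have t2_homog : tvar s s.-1 ^+ 2 \is 2.-homog.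
  rewrite (tvar_last s_gt0); apply: (@dhomogMn _ _ _ 1).
  by rewrite dhomogX; apply/eqP; apply: mdeg1.
have [r [r_eq r_deg]] := pihomogM_dhomog g0 #|J| t2_homog.
rewrite /char_fun -[RHS](char_sum_lowdeg gJ r_deg); apply: eq_bigr => b _; congr (_ * _).
rewrite raddfD raddf_sum /= mevalD raddf_sum /= big1_seq ?add0r; last first.
  move=> p /andP [_ p_in]; have [[e p_homog] p_vanish] := gh_ok p p_in.
  have [r' [-> _]] := pihomogM_dhomog p.1 #|J| (introT (dhomogP _ _ _) p_homog).
  by rewrite mevalM p_vanish ?mulr0 // sgn_pt_in.
by rewrite r_eq !mevalM (tvar_last s_gt0) mevalXU -expr2 (Xset_sqr s_gt0 (sgn_pt_in E b)) mulr1.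
Qed.

Lemma char_fun_leading J f : good_join E J -> leading_mono (setmnm J) f ->
  char_fun J f = f@_(setmnm J) * (2 ^ n)%:R.
Proof.
move=> gJ [J_supp J_max]; rewrite /char_fun.
under eq_bigr => b _ do rewrite pihomogE raddf_sum mulr_sumr /=.
rewrite exchange_big /= [LHS]big_mkcond [LHS](bigD1_seq (setmnm J)) ?msupp_uniq //=.
rewrite mdeg_setmnm eqxx [X in _ + X]big1_seq ?addr0 => [|m /andP [m_neq m_supp]]; last first.
  case: ifP => // /eqP deg_m; under eq_bigr => b _ do rewrite mevalZ mulrCA.
  rewrite -mulr_sumr sum_sgn_pt_good_join ?mulr0 ?deg_m //.
  case=> [/eqP|/grevlex_lt_asym]; first by rewrite (negbTE m_neq).
  by apply; apply: J_max => //; apply/eqP.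
under eq_bigr => b _ do rewrite mevalZ mulrCA (meval_setmnmM (Xset_sqr s_gt0 (sgn_pt_in E b))).
by rewrite -mulr_sumr symdiffvv sum_sgn_pt_even_cycle // even_cycle0.
Qed.

(* [char_fun J'] kills the ideal but not a polynomial with leading term [t^J'], J' \subset J. *)
Lemma Bd_setmnm J : good_join E J -> Bd E #|J| (setmnm J).
Proof.
move=> gJ; split; first exact: mdeg_setmnm.
case=> f [a [f_ideal [f_nz [a_lead a_div]]]].
have [aE aJ] := mdivides_setmnm a_div.
rewrite aE in a_lead; have := char_fun_leading (good_join_sub gJ aJ) a_lead.
rewrite char_fun_ideal ?(good_join_sub gJ aJ) // => /esym/eqP.
rewrite mulf_eq0 (negbTE (F3_pow2_neq0 n)) orbF => /eqP fa0.
by case: a_lead; rewrite mcoeff_msupp fa0 eqxx.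
Qed.

End StandardMonomials.

Section LeadingBinomials.
Variables (n s : nat) (E : 'I_s -> {set 'I_n}).
Hypothesis s_gt0 : (0 < s)%N.
Implicit Types (J C : {set 'I_s}) (a b m : 'X_{1..s}) (f : {mpoly K[s]}).

Lemma binomial_homog_vanishing a b : mdeg a = mdeg b -> cycle_set E (odd_supp (a + b)%MM) ->
  (exists e, is_homog e ('X_[a] - 'X_[b] : {mpoly K[s]})) /\ vanishes_on_X E ('X_[a] - 'X_[b]).
Proof.
move=> deg_ab cyc_ab; split.
  exists (mdeg a) => m; rewrite mcoeff_msupp mcoeffB !mcoeffX.
  by case: (eqVneq a m) => [->|_] //; case: (eqVneq b m) => [<-|_] //; rewrite subrr eqxx.
move=> P P_in; have P_sqr := Xset_sqr s_gt0 P_in.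
have ab1 : ('X_[a] : {mpoly K[s]}).@[P] * ('X_[b] : {mpoly K[s]}).@[P] = 1.
  rewrite -mevalM -mpolyXD (meval_odd_supp P_sqr) (meval_even_cycle s_gt0 P_in) //.
  by rewrite /even_cycle cyc_ab odd_card_odd_supp mdegD deg_ab addnn odd_double.
have b2 : ('X_[b] : {mpoly K[s]}).@[P] ^+ 2 = 1.
  by rewrite (meval_odd_supp P_sqr) (meval_setmnm_sqr P_sqr).
by rewrite mevalB -[X in X - _]mulr1 -b2 expr2 mulrA ab1 mul1r subrr.
Qed.

Lemma leading_mono_binomial a b : grevlex_lt b a -> leading_mono a ('X_[a] - 'X_[b] : {mpoly K[s]}).
Proof.
move=> ba; have ab : b != a.
  by apply/eqP => eq_ba; apply: (grevlex_lt_asym ba); rewrite eq_ba in ba *.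
split; first by rewrite mcoeff_msupp mcoeffB !mcoeffX eqxx (negbTE ab) subr0 oner_neq0.
move=> m; rewrite mcoeff_msupp mcoeffB !mcoeffX => nz ma.
case: (eqVneq b m) => [<- //|bm]; move: nz.
by rewrite (negbTE bm); case: (eqVneq a m) => [am|_]; [case: ma | rewrite subrr eqxx].
Qed.

Lemma Bd_binomial d m a b : Bd E d m -> mdeg a = mdeg b ->
  cycle_set E (odd_supp (a + b)%MM) -> grevlex_lt b a -> ~ mdivides a m.
Proof.
move=> [_ notB] deg_ab cyc_ab ba a_div; apply: notB.
have [ab_homog ab_vanish] := binomial_homog_vanishing deg_ab cyc_ab.
have [a_supp _] := leading_mono_binomial ba.
exists ('X_[a] - 'X_[b]), a; split; last first.
  split; first by apply: contraTneq a_supp => ->; rewrite msupp0.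
  by split=> //; apply: leading_mono_binomial.
exists [:: (1, 'X_[a] - 'X_[b])], 0; split; last by rewrite big_seq1 mul1r mul0r addr0.
by move=> p; rewrite inE => /eqP ->.
Qed.

(* [t_i^2] lies in the ideal: it differs from [t_s^2] by a binomial vanishing on X. *)
Lemma Bd_sqfree d m : Bd E d m -> forall i, (m i <= 1)%N.
Proof.
move=> [_ notB] i; rewrite leqNgt; apply/negP => mi2; apply: notB.
pose a := (U_(i) *+ 2)%MM; pose b := (U_(elast s_gt0) *+ 2)%MM.
have deg_ab : mdeg a = mdeg b by rewrite !mdegMn !mdeg1.
have cyc_ab : cycle_set E (odd_supp (a + b)%MM).
  rewrite (_ : odd_supp _ = set0); first by case/andP: (even_cycle0 E).
  by apply/setP => k; rewrite !inE mnmDE !mulmnE !muln2 oddD !odd_double.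
have [ab_homog ab_vanish] := binomial_homog_vanishing deg_ab cyc_ab.
exists 'X_[a], a; split.
  exists [:: (1, 'X_[a] - 'X_[b])], 1; split; first by move=> p; rewrite inE => /eqP ->.
  by rewrite big_seq1 /= !mul1r (tvar_last s_gt0) mpolyXn subrK.
split; first by rewrite -msupp_eq0 msuppX.
split; first by split=> [|m']; rewrite msuppX inE // => /eqP.
by move=> k; rewrite mulmnE mnm1E; case: eqP => [<-|].
Qed.

Lemma Bd_setmnm_supp d m : Bd E d m -> m = setmnm (suppset m).
Proof.
move=> /Bd_sqfree m_le1; apply/mnmP => i; rewrite setmnmE inE.
by have := m_le1 i; case: (m i) => [|[]].
Qed.

(* A cycle C violating the condition yields the binomial t^(J :&: C) - t^(C :\: J) t_s^c with
   c = #|J :&: C| - #|C :\: J|, whose leading term divides t^J. *)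
Lemma Bd_parity_join d m : Bd E d m -> parity_join E (suppset m).
Proof.
move=> Bm; set J := suppset m; apply/parity_joinP => C /andP [cC C_even].
rewrite leqNgt; apply/negP => big.
have card_C : (#|J :&: C| + #|C :\: J| = #|C|)%N by rewrite setIC cardsID.
set c := (#|J :&: C| - #|C :\: J|)%N.
have c_even : ~~ odd c by move: C_even; rewrite -card_C oddB ?oddD //; lia.
have c_ge2 : (2 <= c)%N.
  have c_pos : (0 < c)%N by rewrite /c; lia.
  by move: c_pos c_even; case: (c) => [|[]].
pose b := (setmnm (C :\: J) + U_(elast s_gt0) *+ c)%MM.
apply: (Bd_binomial (b := b) Bm _ _ _ (mdivides_setmnm_supp (subsetIl J C))).
- by rewrite mdegD mdegMn mdeg1 !mdeg_setmnm; lia.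
- by rewrite odd_supp_addl odd_supp_addl odd_supp_mulmn // symdiff0 symdiff_setI_setD.
- right; split; first by rewrite mdegD mdegMn mdeg1 !mdeg_setmnm; lia.
  exists (elast s_gt0); split; last by move=> j; have := ltn_ord j; rewrite /=; lia.
  rewrite mnmDE !setmnmE mulmnE mnm1E eqxx mul1n.
  by case: (_ \in J :&: C); case: (_ \in C :\: J) => /=; lia.
Qed.

(* Here the binomial is t^(J :&: C) - t^(C :\: J): the last edge of C is missing from J. *)
Lemma Bd_last_edge d m : Bd E d m -> last_edge_cond E (suppset m).
Proof.
move=> Bm; set J := suppset m; apply/last_edge_condP => C eC tie i Ci imax.
apply/negPn/negP => Ji.
have deg_eq : mdeg (setmnm (J :&: C)) = mdeg (setmnm (C :\: J)).
  have card_C : (#|J :&: C| + #|C :\: J| = #|C|)%N by rewrite setIC cardsID.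
  by rewrite !mdeg_setmnm; move: card_C; rewrite -tie -addnn => /eqP; rewrite eqn_add2l => /eqP.
apply: (Bd_binomial Bm deg_eq _ _ (mdivides_setmnm_supp (subsetIl J C))).
  by rewrite odd_supp_addl odd_supp_setmnm symdiff_setI_setD; case/andP: eC.
right; split=> //; exists i; split; first by rewrite !setmnmE in_setI in_setD Ci (negbTE Ji).
move=> j ij; rewrite !setmnmE !inE.
suff -> : (j \in C) = false by rewrite !andbF.
by apply/negbTE/negP => /imax; rewrite leqNgt ij.
Qed.

Lemma Bd_good_join d m : Bd E d m -> good_join E (suppset m).
Proof. by move=> Bm; rewrite /good_join (Bd_parity_join Bm) (Bd_last_edge Bm). Qed.

End LeadingBinomials.

Section Dimension.
Variables (n s : nat) (E : 'I_s -> {set 'I_n}).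
Hypothesis s_gt0 : (0 < s)%N.
Variable d : nat.
Implicit Types (J : {set 'I_s}) (m : 'X_{1..s}).

Definition eval_row m : 'rV[K]_#|Xset E| := \row_i ('X_[m] : {mpoly K[s]}).@[Xpt (E := E) i].

Lemma evrow_X m : evrow E d 'X_[m] = eval_row m.
Proof.
by apply/rowP => i; rewrite !mxE (coordk0 s_gt0) (Xset_e0 s_gt0 (enum_valP i)) expr1n divr1.
Qed.

Lemma eval_row_odd_supp m : eval_row m = eval_row (setmnm (odd_supp m)).
Proof. by apply/rowP => i; rewrite !mxE (meval_odd_supp (Xset_sqr s_gt0 (enum_valP i))). Qed.

Lemma eval_row_even_cycle A B :
  even_cycle E (symdiff A B) -> eval_row (setmnm A) = eval_row (setmnm B).
Proof.
move=> eAB; apply/rowP => i; rewrite !mxE; have P_sqr := Xset_sqr s_gt0 (enum_valP i).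
rewrite -[LHS]mulr1 -(meval_setmnm_sqr P_sqr B) expr2 mulrA (meval_setmnmM P_sqr).
by rewrite (meval_even_cycle s_gt0 (enum_valP i) eAB) mul1r.
Qed.

(* By [good_join_exists] and [good_join_uniq], these represent the classes modulo even cycles
   of the odd parts of the degree-d monomials. *)
Definition good_joins_le := [set J | [&& good_join E J, #|J| <= d & odd #|J| == odd d]%N].

Lemma monos_mdeg m : (m \in monos s d) = (mdeg m == d).
Proof.
apply/mapP/eqP => [[bm] | deg_m]; first by rewrite mem_filter => /andP [/eqP ? _] ->.
have deg_lt : (mdeg m < d.+1)%N by rewrite deg_m.
by exists (BMultinom deg_lt); rewrite // mem_filter /= deg_m eqxx mem_enum inE.
Qed.

Lemma CX_span : CX E d = <<[seq eval_row (setmnm J) | J <- enum good_joins_le]>>%VS.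
Proof.
apply/eqP; rewrite eqEsubv; apply/andP; split; apply: sub_span.
  move=> v /mapP [m]; rewrite monos_mdeg => /eqP deg_m ->.
  have [J [gJ eJ le_J]] := good_join_exists E (odd_supp m).
  rewrite evrow_X eval_row_odd_supp (eval_row_even_cycle eJ); apply: map_f.
  rewrite mem_enum inE gJ (leq_trans le_J) -?deg_m ?card_odd_supp_le //=.
  case/andP: eJ => _; rewrite odd_card_symdiff odd_card_odd_supp deg_m.
  by case: (odd #|J|); case: (odd d).
move=> v /mapP [J]; rewrite mem_enum inE => /and3P [gJ le_Jd /eqP par] ->.
pose m := (setmnm J + U_(e0 s_gt0) *+ (d - #|J|))%MM.
have pad_even : ~~ odd (d - #|J|) by rewrite oddB // par addbb.
have -> : eval_row (setmnm J) = evrow E d 'X_[m].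
  by rewrite evrow_X [RHS]eval_row_odd_supp odd_supp_addl odd_supp_mulmn // symdiff0.
by apply: map_f; rewrite monos_mdeg mdegD mdegMn mdeg1 mdeg_setmnm mul1n subnKC.
Qed.

Definition row_char J (r : 'rV[K]_#|Xset E|) : K :=
  \sum_b ('X_[setmnm J] : {mpoly K[s]}).@[sgn_pt E b] *
         r 0 (enum_rank_in (sgn_pt_in E b) (sgn_pt E b)).

Lemma row_char_eval_row J J' : J \in good_joins_le -> J' \in good_joins_le ->
  row_char J (eval_row (setmnm J')) = (J' == J)%:R * (2 ^ n)%:R.
Proof.
move=> GJ GJ'; rewrite /row_char.
under eq_bigr => b _ do
  rewrite mxE /Xpt enum_rankK_in ?sgn_pt_in // (meval_setmnmM (Xset_sqr s_gt0 (sgn_pt_in E b))).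
case: (eqVneq J' J) => [->|neq].
  by rewrite symdiffvv sum_sgn_pt_even_cycle ?even_cycle0 ?mul1r.
move: GJ GJ'; rewrite !inE => /and3P [gJ _ /eqP pJ] /and3P [gJ' _ /eqP pJ'].
have JJ'_even : ~~ odd #|symdiff J J'| by rewrite odd_card_symdiff pJ pJ' addbb.
rewrite mul0r sum_sgn_pt_noncycle //; apply: contraNN neq => cJJ'.
by rewrite (good_join_uniq gJ gJ') //; apply/andP.
Qed.

Lemma row_char_lincomb J (I : finType) (k : I -> K) (v : I -> 'rV[K]_#|Xset E|) :
  row_char J (\sum_i k i *: v i) = \sum_i k i * row_char J (v i).
Proof.
rewrite /row_char; under eq_bigr => b _ do rewrite summxE mulr_sumr.
rewrite exchange_big /=; apply: eq_bigr => i _; rewrite mulr_sumr.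
by apply: eq_bigr => b _; rewrite mxE mulrCA.
Qed.

Lemma free_good_joins : free [seq eval_row (setmnm J) | J <- enum good_joins_le].
Proof.
apply/freeP => k sum0 i0.
pose Js (i : 'I_#|good_joins_le|) := nth set0 (enum good_joins_le) i.
have i_lt (i : 'I_#|good_joins_le|) : (i < size (enum good_joins_le))%N by rewrite -cardE.
have Js_in i : Js i \in good_joins_le by rewrite -mem_enum mem_nth.
have Js_inj : injective Js.
  by move=> i j /eqP; rewrite nth_uniq ?enum_uniq // => /eqP /val_inj.
have vec_i (i : 'I_#|good_joins_le|) :
    [seq eval_row (setmnm J) | J <- enum good_joins_le]`_i = eval_row (setmnm (Js i)).
  by rewrite (nth_map set0) ?i_lt.
move/(congr1 (row_char (Js i0))): sum0; rewrite row_char_lincomb (bigD1 i0) //= big1 => [|i ne_i].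
  rewrite vec_i row_char_eval_row // eqxx mul1r addr0.
  have -> : row_char (Js i0) 0 = 0 by rewrite /row_char big1 // => b _; rewrite mxE mulr0.
  by move/eqP; rewrite mulf_eq0 (negbTE (F3_pow2_neq0 n)) orbF => /eqP.
by rewrite vec_i row_char_eval_row // (inj_eq Js_inj) (negbTE ne_i) mul0r mulr0.
Qed.

Lemma size_parity_halfE c (i : 'I_d./2.+1) :
  [&& c <= d, odd c == odd d & inord ((d - c)./2) == i]%N = (c == d - i.*2)%N.
Proof.
have i_le := ltn_ord i.
rewrite -val_eqE /= inordK; last by rewrite ltnS half_leq // leq_subr.
apply/and3P/eqP => [[cd /eqP par /eqP <-]|->].
  by have := odd_double_half (d - c); rewrite oddB // par addbb /=; lia.
rewrite leq_subr oddB ?odd_double ?addbF ?eqxx ?subKn ?doubleK //; lia.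
Qed.

Lemma card_good_joins_le : #|good_joins_le| = (\sum_(i < d./2.+1) #|Jset E (d - i.*2)|)%N.
Proof.
pose h J : 'I_d./2.+1 := inord ((d - #|J|)./2).
rewrite -sum1_card (partition_big h xpredT) //=; apply: eq_bigr => i _.
rewrite -sum1_card; apply: eq_bigl => J.
rewrite !inE /good_join.
rewrite -size_parity_halfE -andbA.
by case: (parity_join E J); case: (last_edge_cond E J); rewrite /= ?andbF ?andbT -?andbA.
Qed.

Lemma dim_CX : \dim (CX E d) = (\sum_(i < d./2.+1) #|Jset E (d - i.*2)|)%N.
Proof. by rewrite CX_span (eqP free_good_joins) size_map -cardE card_good_joins_le. Qed.

End Dimension.

Theorem theorem2p4 (n s : nat) (E : 'I_s -> {set 'I_n})
  (hs : (0 < s)%N) (hE2 : forall i, #|E i| = 2%N) (hEinj : injective E)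
  (d : nat) :
  (forall m, Bd E d m -> suppset m \in Jset E d) /\
  (forall m1 m2, Bd E d m1 -> Bd E d m2 -> suppset m1 = suppset m2 -> m1 = m2) /\
  (forall J, J \in Jset E d -> exists m, Bd E d m /\ suppset m = J) /\
  \dim (CX E d) = (\sum_(i < d./2.+1) #|Jset E (d - i.*2)|)%N.
Proof.
split.
  move=> m Bm; have /andP [pJ lJ] := Bd_good_join hs Bm.
  rewrite inE pJ lJ andbT /= -mdeg_setmnm -(Bd_setmnm_supp hs Bm).
  by case: Bm => ->.
split.
  move=> m1 m2 B1 B2 supp_eq.
  by rewrite (Bd_setmnm_supp hs B1) (Bd_setmnm_supp hs B2) supp_eq.
split; last exact: dim_CX.
move=> J; rewrite inE => /and3P [pJ /eqP <- lJ].
exists (setmnm J); rewrite suppset_setmnm; split=> //.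
by apply: (Bd_setmnm hs); rewrite /good_join pJ lJ.
Qed.
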